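(* Let $P=(N,L)$ be a filtration pair for an isolated invariant set $S$. If $x\in N$ satisfies $f^n(x)\in N\setminus L$ for all $n>0$, then $\omega(x)\subset S$.
   Context: Let $X$ be a locally compact metric space, $U\subset X$ open and $f:U\to X$ continuous. A solution through $x$ is a map $\sigma:\mathbb Z\to U$ with $\sigma(0)=x$ and $f(\sigma(n))=\sigma(n+1)$ for all $n$; for $N\subset U$, $\operatorname{Inv} N$ is the set of $x\in N$ admitting a solution through $x$ with all values in $N$. A compact $N\subset U$ is an isolating neighborhood if $\operatorname{Inv} N\subset\operatorname{Int} N$; $S$ is an isolated invariant set if $S=\operatorname{Inv} N$ for some isolating neighborhood $N$. The exit set of $N$ is $N^-=\{x\in N:f(x)\notin\operatorname{Int} N\}$. A filtration pair for an isolated invariant set $S$ is a pair of compact sets $L\subset N$ contained in the interior of the domain of $f$, each the closure of its interior, such that (1) $\operatorname{cl}(N\setminus L)$ is an isolating neighborhood with $\operatorname{Inv}\operatorname{cl}(N\setminus L)=S$; (2) $L$ is a neighborhood of $N^-$ in $N$; (3) $f(L)\cap\operatorname{cl}(N\setminus L)=\emptyset$. The $\omega$-limit set is $\omega(x)=\bigcap_{K>0}\operatorname{cl}\big(\bigcup_{n>K}\{f^n(x)\}\big)$. *)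

From HB Require Import structures.
From mathcomp Require Import all_boot all_order all_algebra.
From mathcomp Require Import all_classical all_reals all_analysis.
Set Implicit Arguments. Unset Strict Implicit. Unset Printing Implicit Defensive.
Import Order.TTheory GRing.Theory Num.Theory.
Local Open Scope classical_set_scope.
Local Open Scope ring_scope.

(* The partial map f : U -> X is modelled as a total map f : X -> X of which
   only the values on U are ever used. *)
Section Conley.
Context {R : realType} {X : pseudoMetricType R}.
Variables (U : set X) (f : X -> X).

Definition solution_through (sigma : int -> X) (x : X) : Prop :=
  sigma 0 = x /\ forall n : int, U (sigma n) /\ f (sigma n) = sigma (n + 1).

Definition Inv (N : set X) : set X :=
  [set x | N x /\ exists sigma, solution_through sigma x /\ forall n, N (sigma n)].

Definition isolating_nbhd (N : set X) : Prop :=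
  compact N /\ N `<=` U /\ Inv N `<=` interior N.

Definition isolated_invariant_set (S : set X) : Prop :=
  exists N, isolating_nbhd N /\ S = Inv N.

Definition exit_set (N : set X) : set X :=
  [set x | N x /\ ~ (interior N) (f x)].

Definition rel_nbhd_in (N L A : set X) : Prop :=
  exists O : set X, open O /\ A `<=` O /\ O `&` N `<=` L.

Definition filtration_pair (S N L : set X) : Prop :=
  compact N /\ compact L /\ L `<=` N /\
  N `<=` interior U /\
  closure (interior N) = N /\ closure (interior L) = L /\
  (isolating_nbhd (closure (N `\` L)) /\ Inv (closure (N `\` L)) = S) /\
  rel_nbhd_in N L (exit_set N) /\
  f @` L `&` closure (N `\` L) = set0.

Definition omega_limit (x : X) : set X :=
  \bigcap_(K in [set K : nat | (0 < K)%N])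
     closure [set iter n f x | n in [set n : nat | (K < n)%N]].

End Conley.

From Pilot Require Import Defs.
From HB Require Import structures.
From mathcomp Require Import all_boot all_order all_algebra.
From mathcomp Require Import all_classical all_reals all_analysis.
Local Open Scope classical_set_scope.
Local Open Scope ring_scope.

(* Every forward iterate of x lies in the compact set M = cl(N \ L), so w(x)
   is contained in M and, by continuity, f maps w(x) into itself.  Compactness
   of M also makes w(x) backward invariant: a cluster point of the iterates
   f^n x whose successor f^(n+1) x is close to y is a preimage of y in w(x).
   Hence each point of w(x) lies on a full solution inside M, i.e. in
   Inv M = S; only property (1) of the filtration pair is needed. *)

Section OmegaLimit.
Context {R : realType} {X : pseudoMetricType R}.
Variables (f : X -> X) (x : X).

Lemma omega_limit_sub_closed (A : set X) :
  closed A -> (forall n, (0 < n)%N -> A (iter n f x)) -> omega_limit f x `<=` A.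
Proof.
move=> /closure_id cA orbA y /(_ 1%N erefl); rewrite cA; apply: closureS.
by move=> _ [n n1 <-]; apply: orbA; exact: ltn_trans n1.
Qed.

Lemma omega_limit_map {y : X} :
  {for y, continuous f} -> omega_limit f x y -> omega_limit f x (f y).
Proof.
move=> fy wy K K0 B /fy /= By.
have [_ [[n nK <-] /= Bn]] := wy K K0 _ By.
by exists (iter n.+1 f x); split => //; exists n.+1 => //; exact: ltnW.
Qed.

Definition preimage_orbit_filter (y : X) : set_system X :=
  filter_from [set KV : nat * set X | nbhs y KV.2]
    (fun KV => [set iter n f x | n in [set n | (KV.1 < n)%N /\ KV.2 (iter n.+1 f x)]]).

Lemma preimage_orbit_proper_filter {y : X} :
  omega_limit f x y -> ProperFilter (preimage_orbit_filter y).
Proof.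
move=> wy; apply: filter_from_proper.
  apply: filter_from_filter; first by exists (0%N, setT); exact: filterT.
  move=> [K V] [K' V'] /= yV yV'; exists (maxn K K', V `&` V'); first exact: filterI.
  move=> _ [n [/= nK [Vn V'n]] <-]; split; exists n => //=; split => //.
    exact: leq_ltn_trans (leq_maxl _ _) nK.
  exact: leq_ltn_trans (leq_maxr _ _) nK.
move=> [K V] /= yV; have [_ [[m mK <-] /= Vm]] := wy K.+2 erefl V yV.
rewrite /= in mK; case: m mK Vm => [//|m] mK Vm.
by exists (iter m f x), m => //; split => //=; rewrite ltnS in mK; exact: ltnW.
Qed.

Lemma preimage_orbit_cluster {y z : X} : hausdorff_space X ->
  {for z, continuous f} -> cluster (preimage_orbit_filter y) z ->
  omega_limit f x z /\ f z = y.
Proof.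
move=> hX fz cz; split.
  move=> K K0 V Vz.
  have BK : preimage_orbit_filter y
      [set iter n f x | n in [set n | (K < n)%N /\ setT (iter n.+1 f x)]].
    by exists (K, setT) => //; exact: filterT.
  have [_ [[n [/= nK _] <-] Vn]] := cz _ _ BK Vz.
  by exists (iter n f x); split => //; exists n.
apply: hX => A C /fz /= Az Cy.
have BC : preimage_orbit_filter y
    [set iter n f x | n in [set n | (0 < n)%N /\ C (iter n.+1 f x)]].
  by exists (0%N, C).
have [_ [[n [/= _ Cn] <-] An]] := cz _ _ BC Az.
by exists (iter n.+1 f x); split => //=; rewrite iterS.
Qed.

Lemma omega_limit_sub_image (M : set X) : hausdorff_space X -> compact M ->
  (forall z, M z -> {for z, continuous f}) ->
  (forall n, (0 < n)%N -> M (iter n f x)) ->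
  omega_limit f x `<=` f @` omega_limit f x.
Proof.
move=> hX cM fM orbM y wy.
have PF := preimage_orbit_proper_filter wy.
have FM : preimage_orbit_filter y M.
  exists (0%N, setT); first exact: filterT.
  by move=> _ [n [/= n0 _] <-]; exact: orbM.
have [z [Mz cz]] := cM _ PF FM.
by have [wz <-] := preimage_orbit_cluster hX (fM z Mz) cz; exists z.
Qed.

End OmegaLimit.

Section Invariance.
Context {R : realType} {X : pseudoMetricType R}.
Variables (U : set X) (f : X -> X).

(* Unqualified, [Inv] would refer to a notation of mathcomp's [functions]. *)
Lemma Inv_subset {A B : set X} : A `<=` B -> Defs.Inv U f A `<=` Defs.Inv U f B.
Proof.
move=> AB y [Ay [sigma [sol As]]]; split; first exact: AB.
by exists sigma; split => // n; exact: AB.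
Qed.

Lemma invariant_sub_Inv (W : set X) : W `<=` U ->
  (forall y, W y -> W (f y)) -> W `<=` f @` W -> W `<=` Defs.Inv U f W.
Proof.
move=> WU fW Wf.
have [g gW] : exists g : X -> X, forall y, W y -> W (g y) /\ f (g y) = y.
  exists (fun y => if pselect (W y) is left wy then sval (cid2 (Wf y wy)) else y).
  by move=> y wy; case: pselect => // wy'; case: cid2.
move=> y wy; split => //.
pose sigma (n : int) := match n with Posz k => iter k f y | Negz k => iter k.+1 g y end.
have Wsigma n : W (sigma n).
  case: n => k /=; elim: k => [|k IH] //=; [exact: fW | exact: (gW y wy).1 |
                                               exact: (gW _ IH).1].
exists sigma; split => //; split => // n; split; first exact: WU.
case: n => [k|[|k]] /=.
- by rewrite addn1.
- exact: (gW y wy).2.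
- rewrite subn1 /=; exact: (gW _ (Wsigma (Negz k))).2.
Qed.

End Invariance.

Theorem mainTheorem8 (R : realType) (X : pseudoMetricType R)
  (U : set X) (f : X -> X) (S N L : set X) (x : X) :
  hausdorff_space X ->
  locally_compact [set: X] ->
  open U ->
  (forall y, U y -> {for y, continuous f}) ->
  isolated_invariant_set U f S ->
  filtration_pair U f S N L ->
  N x ->
  (forall n : nat, (0 < n)%N -> (N `\` L) (iter n f x)) ->
  omega_limit f x `<=` S.
Proof.
move=> hX _ _ fU _ [_ [_ [_ [_ [_ [_ [[[cM [MU _]] <-] _]]]]]]] _ orbNL.
set M := closure (N `\` L) in cM MU *.
have orbM n : (0 < n)%N -> M (iter n f x) by move/orbNL; exact: subset_closure.
have wM : omega_limit f x `<=` M.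
  by apply: omega_limit_sub_closed orbM; exact: closed_closure.
have fM z : M z -> {for z, continuous f} by move/MU; exact: fU.
have wInv : omega_limit f x `<=` Defs.Inv U f (omega_limit f x).
  apply: invariant_sub_Inv.
  - by move=> y /wM /MU.
  - by move=> y wy; exact: omega_limit_map (fM _ (wM _ wy)) wy.
  - exact: omega_limit_sub_image hX cM fM orbM.
by move=> y /wInv; exact: Inv_subset.
Qed.
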